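(* Let $\mathbf{y}$ be observed data with summary statistic vector $s(\mathbf{y})\in\mathbb{R}^\kappa$, and let $(\theta^i,\mathbf{x}^{i*})$, $i=1,\dots,N$, be parameter samples paired with simulated pseudo-data having summary statistics $s(\mathbf{x}^{i*})\in\mathbb{R}^\kappa$. For a weight vector $\mathbf{w}\in E\subset\mathbb{R}^\kappa$, define the weighted distance $d_{\mathbf{w}}(s(\mathbf{x}),s(\mathbf{y}))=\sum_{i=1}^\kappa w_i^2(s_i(\mathbf{x})-s_i(\mathbf{y}))^2$, and let $Y^{(\mathbf{w})}_{1:n}$ be the parameter samples $\theta^i$ corresponding to the $n=M=\lfloor\alpha N\rfloor$ pseudo-data sets closest to $\mathbf{y}$ under $d_{\mathbf{w}}$. Let $X_{1:n}$ be a fixed sample (from the prior). Then $L(\mathbf{w})=\hat{D}_h(X_{1:n}\|Y^{(\mathbf{w})}_{1:n})$ is piecewise constant with respect to $\mathbf{w}\in E$, with finitely many discontinuities.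
   Context: For samples $X_{1:n},Y_{1:n}$ in $\mathbb{R}^d$ and an integer $k\ge 2$, let $\rho_k(i)$ be the Euclidean distance from $X_i$ to its $k$th nearest neighbour in $X_{1:n}$ (excluding itself) and $\nu_k(i)$ the distance from $X_i$ to its $k$th nearest neighbour in $Y_{1:n}$. The estimator is $\hat D_{\alpha'}(X_{1:n}\|Y_{1:n})=\frac1n\sum_{i=1}^n\left(\frac{(n-1)\rho_k(i)}{n\nu_k(i)}\right)^{1-\alpha'}B_{k,\alpha'}$ with $B_{k,\alpha'}=\frac{\Gamma(k)^2}{\Gamma(k-\alpha'+1)\Gamma(k+\alpha'-1)}$, and $\hat D_h=1-\hat D_{1/2}$. Here $\alpha\in(0,1)$ is the ABC acceptance proportion. *)

From HB Require Import structures.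
From mathcomp Require Import all_boot all_order all_algebra.
From mathcomp Require Import all_classical all_reals all_analysis.
Set Implicit Arguments. Unset Strict Implicit. Unset Printing Implicit Defensive.
Import Order.TTheory GRing.Theory Num.Theory.
Import numFieldNormedType.Exports.
Local Open Scope classical_set_scope.
Local Open Scope ring_scope.

Section Defs.
Variable R : realType.

Definition Gamma (x : R) : R :=
  Rintegral (@lebesgue_measure R) `]0, +oo[%classic
    (fun t => t `^ (x - 1) * expR (- t)).

Definition eucl_dist (d : nat) (u v : 'rV[R]_d) : R :=
  Num.sqrt (\sum_(l < d) (u ord0 l - v ord0 l) ^+ 2).

(* k-th smallest element (k >= 1) of a finite sequence of reals
   (0 if the sequence has fewer than k elements). *)
Definition kth_smallest (k : nat) (s : seq R) : R :=
  nth 0 (sort <=%R s) k.-1.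

Definition rho_k (d n k : nat) (X : 'I_n -> 'rV[R]_d) (i : 'I_n) : R :=
  kth_smallest k [seq eucl_dist (X i) (X j) | j <- enum 'I_n & j != i].

Definition nu_k (d n k : nat) (X Y : 'I_n -> 'rV[R]_d) (i : 'I_n) : R :=
  kth_smallest k [seq eucl_dist (X i) (Y j) | j <- enum 'I_n].

Definition B_const (k : nat) (a : R) : R :=
  Gamma k%:R ^+ 2 / (Gamma (k%:R - a + 1) * Gamma (k%:R + a - 1)).

Definition D_alpha_hat (d n k : nat) (a : R) (X Y : 'I_n -> 'rV[R]_d) : R :=
  n%:R^-1 * \sum_(i < n)
     ((((n%:R - 1) * rho_k k X i) / (n%:R * nu_k k X Y i)) `^ (1 - a)
        * B_const k a).

Definition D_h_hat (d n k : nat) (X Y : 'I_n -> 'rV[R]_d) : R :=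
  1 - D_alpha_hat k (2^-1) X Y.

Definition d_w (kappa : nat) (w sx sy : 'rV[R]_kappa) : R :=
  \sum_(l < kappa) w ord0 l ^+ 2 * (sx ord0 l - sy ord0 l) ^+ 2.

Definition abc_before (kappa N : nat) (w : 'rV[R]_kappa)
    (S : 'I_N -> 'rV[R]_kappa) (sy : 'rV[R]_kappa) (j i : 'I_N) : bool :=
  (d_w w (S j) sy < d_w w (S i) sy) ||
  ((d_w w (S j) sy == d_w w (S i) sy) && (j < i)%N).

(* indices of the M closest pseudo-data sets (in increasing index order) *)
Definition abc_selected (kappa N M : nat) (w : 'rV[R]_kappa)
    (S : 'I_N -> 'rV[R]_kappa) (sy : 'rV[R]_kappa) : seq 'I_N :=
  [seq i <- enum 'I_N | (#|[pred j | abc_before w S sy j i]| < M)%N].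

(* Y^{(w)}_{1:M}: the accepted parameter samples, as an M-indexed family
   (default th0 is never used since exactly M indices are selected). *)
Definition Y_w (d kappa N M : nat) (w : 'rV[R]_kappa)
    (S : 'I_N -> 'rV[R]_kappa) (sy : 'rV[R]_kappa)
    (theta : 'I_N -> 'rV[R]_d) : 'I_M -> 'rV[R]_d :=
  fun m => nth 0 [seq theta i | i <- @abc_selected kappa N M w S sy] m.

Definition L_w (d kappa N M k : nat) (X : 'I_M -> 'rV[R]_d)
    (S : 'I_N -> 'rV[R]_kappa) (sy : 'rV[R]_kappa)
    (theta : 'I_N -> 'rV[R]_d) (w : 'rV[R]_kappa) : R :=
  D_h_hat k X (@Y_w d kappa N M w S sy theta).

End Defs.

From HB Require Import structures.
From mathcomp Require Import all_boot all_order all_algebra.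
From mathcomp Require Import all_classical all_reals all_analysis.
Set Implicit Arguments. Unset Strict Implicit. Unset Printing Implicit Defensive.
Import Order.TTheory GRing.Theory Num.Theory.
Import numFieldNormedType.Exports.
Local Open Scope classical_set_scope.
Local Open Scope ring_scope.

(* The comparison of pseudo-data sets i and j under d_w is decided by the sign
   of d_w(s(x^j), s(y)) - d_w(s(x^i), s(y)), a quadratic form in w whose
   coefficients c_l = (s_l(x^j) - s_l(y))^2 - (s_l(x^i) - s_l(y))^2 do not
   depend on w.  Off the zero sets of the nonzero such forms, all these signs
   are locally constant, hence so are the accepted set of indices and L.
   Moreover L only depends on w through the accepted set of indices, a subset
   of {1, ..., N}, so it takes finitely many values. *)

Lemma near_sgr (R : realFieldType) (T : topologicalType) (f : T -> R) (x : T) :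
  {for x, continuous f} -> f x != 0 ->
  \forall y \near x, Num.sg (f y) = Num.sg (f x).
Proof.
move=> fx; case: ltgtP => // [fx_lt0|fx_gt0] _.
- by near do rewrite !ltr0_sg //; exact: cvgr_lt fx _ fx_lt0.
- by near do rewrite !gtr0_sg //; exact: cvgr_gt fx _ fx_gt0.
Unshelve. all: by end_near. Qed.

Lemma finite_range_filter_enum (U : Type) (T : finType) (p : U -> pred T) :
  finite_set (range (fun u => [seq i <- enum T | p u i])).
Proof.
pose sel (q : {ffun T -> bool}) := [seq i <- enum T | q i].
apply: (@sub_finite_set _ _ (range sel)); last exact/finite_image/finite_finset.
move=> _ [u _ <-]; exists [ffun i => p u i] => //.
by apply: eq_filter => i; rewrite ffunE.
Qed.

Section WeightedDistance.
Variables (R : realType) (kappa : nat).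

Definition quad_form (c w : 'rV[R]_kappa) : R :=
  \sum_(l < kappa) c ord0 l * w ord0 l ^+ 2.

Lemma quad_form0 (w : 'rV[R]_kappa) : quad_form 0 w = 0.
Proof. by rewrite /quad_form big1 // => l _; rewrite mxE mul0r. Qed.

Lemma quad_form_continuous (c : 'rV[R]_kappa) : continuous (quad_form c).
Proof.
move=> w0; apply: (@cvg_big _ _ +%R 0 xpredT); first exact: add_continuous.
  exact: nbhs_filter.
move=> l _; apply: cvgMl_tmp; first exact: nbhs_filter.
exact: cvgM (@coord_continuous R 1 kappa ord0 l w0)
  (@coord_continuous R 1 kappa ord0 l w0).
Qed.

Variables (N : nat) (S : 'I_N -> 'rV[R]_kappa) (sy : 'rV[R]_kappa).

Definition dist_gap (i j : 'I_N) : 'rV[R]_kappa :=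
  \row_l ((S j ord0 l - sy ord0 l) ^+ 2 - (S i ord0 l - sy ord0 l) ^+ 2).

Lemma d_wB (w : 'rV[R]_kappa) (i j : 'I_N) :
  d_w w (S j) sy - d_w w (S i) sy = quad_form (dist_gap i j) w.
Proof.
rewrite /d_w /quad_form -sumrB; apply: eq_bigr => l _.
by rewrite mxE [RHS]mulrC mulrBr.
Qed.

Lemma abc_before_sgE (w : 'rV[R]_kappa) (i j : 'I_N) :
  abc_before w S sy j i =
  (Num.sg (quad_form (dist_gap i j) w) == -1) ||
  (Num.sg (quad_form (dist_gap i j) w) == 0) && (j < i)%N.
Proof. by rewrite /abc_before !sgr_cp0 -d_wB subr_lt0 subr_eq0. Qed.

Lemma near_abc_before (w0 : 'rV[R]_kappa) :
  (forall i j, dist_gap i j != 0 -> quad_form (dist_gap i j) w0 != 0) ->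
  \forall w \near w0, forall j i, abc_before w S sy j i = abc_before w0 S sy j i.
Proof.
move=> w0_off.
apply: filter_forall (nbhs_filter w0) _ => j.
apply: filter_forall (nbhs_filter w0) _ => i.
have [gap0|gap_neq0] := eqVneq (dist_gap i j) 0.
  by near=> w; rewrite !abc_before_sgE gap0 !quad_form0.
near=> w; rewrite !abc_before_sgE.
suff -> : Num.sg (quad_form (dist_gap i j) w) = Num.sg (quad_form (dist_gap i j) w0)
  by [].
near: w; exact: near_sgr (@quad_form_continuous _ w0) (w0_off _ _ gap_neq0).
Unshelve. all: by end_near. Qed.

Lemma eq_abc_selected (M : nat) (w w' : 'rV[R]_kappa) :
  (forall j i, abc_before w S sy j i = abc_before w' S sy j i) ->
  abc_selected M w S sy = abc_selected M w' S sy.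
Proof.
move=> before_eq; apply: eq_filter => i; congr (_ < M)%N.
by apply: eq_card => j; rewrite !inE before_eq.
Qed.

End WeightedDistance.

Theorem lemma4 (R : realType) (d kappa N k : nat) (alpha : R)
    (E : set 'rV[R]_kappa)
    (sy : 'rV[R]_kappa) (S : 'I_N -> 'rV[R]_kappa)
    (theta : 'I_N -> 'rV[R]_d)
    (M : nat) (X : 'I_M -> 'rV[R]_d) :
  0 < alpha < 1 -> (2 <= k)%N -> (M%:Z = Num.floor (alpha * N%:R))%R ->
  let L := L_w k X S sy theta in
  finite_set (L @` E) /\
  exists cs : seq 'rV[R]_kappa,
    all (fun c => c != 0) cs /\
    forall w0, E w0 ->
      (forall c, c \in cs -> \sum_(l < kappa) c ord0 l * w0 ord0 l ^+ 2 != 0) ->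
      \forall w \near w0, E w -> L w = L w0.
Proof.
move=> _ _ _ L; split.
  pose D_of (s : seq 'I_N) :=
    D_h_hat k X (fun m : 'I_M => nth 0 [seq theta i | i <- s] m).
  have -> : L = D_of \o (fun w => abc_selected M w S sy) by [].
  rewrite -image_comp.
  apply/finite_image/(sub_finite_set (image_subset _ (@subsetT _ E))).
  exact: finite_range_filter_enum.
pose gaps := [seq dist_gap S sy p.1 p.2 | p <- enum {: 'I_N * 'I_N}].
exists [seq c <- gaps | c != 0]; split; first exact: filter_all.
move=> w0 _ w0_off; have w0_off' i j : dist_gap S sy i j != 0 ->
    quad_form (dist_gap S sy i j) w0 != 0.
  move=> gap_neq0; apply: w0_off; rewrite mem_filter gap_neq0.
  by apply/mapP; exists (i, j); rewrite ?mem_enum.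
by apply: filterS (near_abc_before w0_off') => w /eq_abc_selected sel_eq _;
  rewrite /L /L_w /Y_w sel_eq.
Qed.
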